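(* Let $(A,\succ,\prec)$ be an anti-pre-Novikov algebra with associated Novikov algebra $(A,\circ)$, and let $s=\sum_i a_i\otimes b_i\in A\otimes A$ be skew-symmetric ($\tau(s)=-s$). The following are equivalent: (a) $s$ is a solution of the anti-pre-Novikov Yang–Baxter equation in $(A,\succ,\prec)$, i.e. $\sum_{i,j}a_i\circ a_j\otimes b_i\otimes b_j+\sum_{i,j}a_j\otimes a_i\otimes(b_i\odot b_j)+\sum_{i,j}a_i\otimes(b_i\prec a_j)\otimes b_j=0$; (b) $T_s$ is an $\mathcal O$-operator on $(A,\circ)$ associated to the representation $(A^*,-L_{\odot}^*,R_{\prec}^* )$; (c) $T_s$ is an $\mathcal O$-operator on $(A,\succ,\prec)$ associated to the representation $(A^*,-L_{\star}^*,-R_{\succ}^*,R_{\odot}^*,R_{\circ}^* )$.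
   Context: $A$ is finite-dimensional over a field $k$. An anti-pre-Novikov algebra is $(A,\succ,\prec)$ such that with $x\circ y=x\succ y+x\prec y$: $(x\circ y-y\circ x)\succ z=y\succ(x\succ z)-x\succ(y\succ z)$; $x\prec(y\circ z)=(y\succ x)\prec z-(x\prec y)\prec z-y\succ(x\prec z)$; $(x\circ y)\succ z=-(x\succ z)\prec y$; $(x\prec y)\prec z=(x\prec z)\prec y$; $(x\circ y-y\circ x)\prec z=x\succ(y\circ z)-y\succ(x\circ z)$; $(A,\circ)$ is then a Novikov algebra. Notation: $x\odot y=x\succ y+y\prec x$; $L_\ast(x)y=x\ast y$, $R_\ast(x)y=y\ast x$; $L_{\star}=L_{\circ}+R_{\circ}$, $L_{\odot}=L_{\succ}+R_{\prec}$, $R_{\odot}=R_{\succ}+L_{\prec}$; for $f:A\to\mathrm{End}(A)$, $\langle f^*(x)\zeta,y\rangle=-\langle\zeta,f(x)y\rangle$; $T_s:A^*\to A$, $\langle T_s(\zeta),\eta\rangle=\langle s,\zeta\otimes\eta\rangle$. An $\mathcal O$-operator on a Novikov algebra $(A,\circ)$ associated to a representation $(V,l,r)$ is a linear $T:V\to A$ with $T(u)\circ T(v)=T(l(T(u))v+r(T(v))u)$. An $\mathcal O$-operator on $(A,\succ,\prec)$ associated to a representation $(V,l_{\succ},r_{\succ},l_{\prec},r_{\prec})$ is a linear $T:V\to A$ with $T(u)\succ T(v)=T(l_{\succ}(T(u))v+r_{\succ}(T(v))u)$ and $T(u)\prec T(v)=T(l_{\prec}(T(u))v+r_{\prec}(T(v))u)$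 for all $u,v\in V$. (The tuples in (b),(c) are representations of $(A,\circ)$ and $(A,\succ,\prec)$ respectively.) *)

From HB Require Import structures.
From mathcomp Require Import all_boot all_order all_algebra.
Set Implicit Arguments. Unset Strict Implicit. Unset Printing Implicit Defensive.
Import GRing.Theory.
Local Open Scope ring_scope.

Section AntiPreNovikov.
Variables (K : fieldType) (A : vectType K).

Definition dual := 'Hom(A, K^o).

Definition bilinear_op (m : A -> A -> A) : Prop :=
  (forall (a : K) (x y z : A), m (a *: x + y) z = a *: m x z + m y z) /\
  (forall (a : K) (x y z : A), m x (a *: y + z) = a *: m x y + m x z).

Definition circ (succ prec : A -> A -> A) (x y : A) : A := succ x y + prec x y.
Definition odot (succ prec : A -> A -> A) (x y : A) : A := succ x y + prec y x.

Definition anti_pre_Novikov (succ prec : A -> A -> A) : Prop :=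
  let o := circ succ prec in
  bilinear_op succ /\ bilinear_op prec /\
  (forall x y z, succ (o x y - o y x) z = succ y (succ x z) - succ x (succ y z)) /\
  (forall x y z, prec x (o y z) =
      prec (succ y x) z - prec (prec x y) z - succ y (prec x z)) /\
  (forall x y z, succ (o x y) z = - prec (succ x z) y) /\
  (forall x y z, prec (prec x y) z = prec (prec x z) y) /\
  (forall x y z, prec (o x y - o y x) z = succ x (o y z) - succ y (o x z)).

(* Operators A -> End(A) are encoded as f : A -> A -> A with f x y = f(x) y.
   L_*(x) y = x * y,  R_*(x) y = y * x. *)
Definition Lmul (m : A -> A -> A) (x y : A) : A := m x y.
Definition Rmul (m : A -> A -> A) (x y : A) : A := m y x.
Definition Lstar (succ prec : A -> A -> A) (x y : A) : A :=
  Lmul (circ succ prec) x y + Rmul (circ succ prec) x y.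
Definition Lodot (succ prec : A -> A -> A) (x y : A) : A :=
  Lmul succ x y + Rmul prec x y.
Definition Rodot (succ prec : A -> A -> A) (x y : A) : A :=
  Rmul succ x y + Lmul prec x y.

Definition dualrep (f : A -> A -> A) (x : A) (zeta : dual) : dual :=
  linfun (fun y : A => (- zeta (f x y)) : K^o).
Definition negrep (r : A -> dual -> dual) (x : A) (zeta : dual) : dual :=
  - r x zeta.

(* Tensors are given as finite sums of pure tensors; an element of
   A (x) A (resp. A (x) A (x) A) is identified, as usual in finite dimension,
   with its pairing against A^# (x) A^# (resp. A^# (x) A^# (x) A^#):
   <x (x) y, zeta (x) eta> = zeta(x) eta(y). *)

Definition tensor2 (m : nat) (a b : 'I_m -> A) (zeta eta : dual) : K :=
  \sum_(i < m) zeta (a i) * eta (b i).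

Definition skew_symmetric (m : nat) (a b : 'I_m -> A) : Prop :=
  forall zeta eta : dual, tensor2 b a zeta eta = - tensor2 a b zeta eta.

Definition APN_YBE (succ prec : A -> A -> A) (m : nat) (a b : 'I_m -> A) : Prop :=
  forall zeta eta theta : dual,
    \sum_(i < m) \sum_(j < m)
       (zeta (circ succ prec (a i) (a j)) * eta (b i) * theta (b j)
      + zeta (a j) * eta (a i) * theta (odot succ prec (b i) (b j))
      + zeta (a i) * eta (prec (b i) (a j)) * theta (b j)) = 0.

(* T_s : A^# -> A, <T_s(zeta), eta> = <s, zeta (x) eta>,
   i.e. T_s(zeta) = sum_i zeta(a_i) b_i *)
Definition Ts (m : nat) (a b : 'I_m -> A) (zeta : dual) : A :=
  \sum_(i < m) zeta (a i) *: b i.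

Definition O_operator_Nov (o : A -> A -> A) (l r : A -> dual -> dual)
    (T : dual -> A) : Prop :=
  linear T /\
  forall u v : dual, o (T u) (T v) = T (l (T u) v + r (T v) u).

Definition O_operator_APN (succ prec : A -> A -> A)
    (lsucc rsucc lprec rprec : A -> dual -> dual) (T : dual -> A) : Prop :=
  linear T /\
  (forall u v : dual, succ (T u) (T v) = T (lsucc (T u) v + rsucc (T v) u)) /\
  (forall u v : dual, prec (T u) (T v) = T (lprec (T u) v + rprec (T v) u)).

End AntiPreNovikov.

From HB Require Import structures.
From mathcomp Require Import all_boot all_order all_algebra.
From mathcomp Require Import ring.

(* Pair everything with linear forms.  Skew-symmetry of s says exactly that
   <th, T_s u> = - <u, T_s th>, so each entry a_i or b_i of s occurring in the
   Yang-Baxter tensor can be absorbed into T_s; paired with z (x) e (x) t that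
   tensor becomes the trilinear form [ybe_form z e t] below.  In the same way
   the defect of the O-operator identity in (b), paired with th, is
   [ybe_form th u v], and the two defects in (c) are
   [ybe_form v u th + ybe_form v th u] and its complement, so (a), (b) and (c)
   all say that [ybe_form] vanishes. *)
Set Implicit Arguments. Unset Strict Implicit.
Import GRing.Theory.
Local Open Scope ring_scope.

Lemma linear_comb (R : pzRingType) (U V : lmodType R) (f : U -> V) :
  linear f -> forall n (c : 'I_n -> R) (x : 'I_n -> U),
  f (\sum_(i < n) c i *: x i) = \sum_(i < n) c i *: f (x i).
Proof.
move=> lin_f n c x.
pose fL : {linear U -> V} := HB.pack f (GRing.isLinear.Build _ _ _ _ f lin_f).
rewrite -[f]/(fL : U -> V) linear_sum; apply: eq_bigr => i _; exact: linearZ.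
Qed.

Lemma linfun_linearE (K : fieldType) (aT rT : vectType K) (f : aT -> rT) :
  linear f -> linfun f =1 f.
Proof.
move=> lin_f; exact: (lfunE (HB.pack f (GRing.isLinear.Build _ _ _ _ f lin_f))).
Qed.

Section Dual.
Variables (K : fieldType) (A : vectType K).

Lemma eq_dual (x y : A) : (forall th : dual A, th x = th y) -> x = y.
Proof.
move=> eq_th; apply/eqP; rewrite -subr_eq0; apply/eqP.
rewrite (coord_vbasis (memvf (x - y))); apply: big1 => i _.
have := eq_th (linfun (coord (vbasis fullv) i : A -> K^o)).
by rewrite !lfunE /= => eq_i; rewrite linearB /= eq_i subrr scale0r.
Qed.

Lemma bilinear_op_linearr (mu : A -> A -> A) : bilinear_op mu -> forall x, linear (mu x).
Proof. by move=> [_ mu_r] x k y z; apply: mu_r. Qed.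

Lemma bilinear_op_linearl (mu : A -> A -> A) : bilinear_op mu -> forall y, linear (mu^~ y).
Proof. by move=> [mu_l _] y k x z; apply: mu_l. Qed.

Lemma bilinear_opD (mu nu : A -> A -> A) : bilinear_op mu -> bilinear_op nu ->
  bilinear_op (fun x y => mu x y + nu x y).
Proof.
move=> [mu_l mu_r] [nu_l nu_r]; split=> k x y z.
  by rewrite mu_l nu_l scalerDr addrACA.
by rewrite mu_r nu_r scalerDr addrACA.
Qed.

Lemma bilinear_opT (mu : A -> A -> A) : bilinear_op mu -> bilinear_op (fun x y => mu y x).
Proof. by move=> [mu_l mu_r]; split=> k x y z; [apply: mu_r | apply: mu_l]. Qed.

Lemma bilinear_op_sum (mu : A -> A -> A) : bilinear_op mu ->
  forall n (c d : 'I_n -> K) (x y : 'I_n -> A),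
  mu (\sum_(i < n) c i *: x i) (\sum_(j < n) d j *: y j)
  = \sum_(i < n) \sum_(j < n) (c i * d j) *: mu (x i) (y j).
Proof.
move=> mu_bil n c d x y.
rewrite (linear_comb (bilinear_op_linearl mu_bil _)); apply: eq_bigr => i _.
rewrite (linear_comb (bilinear_op_linearr mu_bil _)) scaler_sumr.
by apply: eq_bigr => j _; rewrite scalerA.
Qed.

Lemma dualrepE (f : A -> A -> A) : bilinear_op f ->
  forall x (zeta : dual A) y, dualrep f x zeta y = - zeta (f x y).
Proof.
move=> f_bil x zeta y; rewrite /dualrep linfun_linearE // => k u v.
by rewrite (bilinear_op_linearr f_bil) linearD linearZ /= opprD -mulrN.
Qed.

Section SkewTensor.
Variables (m : nat) (a b : 'I_m -> A).
Local Notation T := (Ts a b).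

Lemma Ts_linear : linear T.
Proof.
move=> k u v; rewrite /Ts scaler_sumr -big_split; apply: eq_bigr => i _.
by rewrite add_lfunE scale_lfunE scalerDl scalerA.
Qed.

Lemma dual_Ts (th u : dual A) : th (T u) = tensor2 a b u th.
Proof. by rewrite linear_sum; apply: eq_bigr => i _; rewrite linearZ. Qed.

Hypothesis skew_ab : skew_symmetric a b.

Lemma Ts_skew (th u : dual A) : th (T u) = - u (T th).
Proof.
by rewrite !dual_Ts -skew_ab; apply: eq_bigr => i _; rewrite mulrC.
Qed.

Lemma Ts_skew_sum (u : dual A) : T u = \sum_(i < m) (- u (b i)) *: a i.
Proof.
apply: eq_dual => th; rewrite dual_Ts -[tensor2 _ _ _ _]opprK -skew_ab.
by rewrite linear_sum -sumrN; apply: eq_bigr => i _; rewrite linearZ /= scaleNr.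
Qed.

Section YangBaxter.
Variables (succ prec : A -> A -> A).
Hypotheses (succ_bil : bilinear_op succ) (prec_bil : bilinear_op prec).

Let circ_bil : bilinear_op (circ succ prec) := bilinear_opD succ_bil prec_bil.
(* [odot succ prec] is also convertible to [Lodot succ prec]. *)
Let odot_bil : bilinear_op (odot succ prec) :=
  bilinear_opD succ_bil (bilinear_opT prec_bil).

Definition ybe_form (z e t : dual A) : K :=
  z (circ succ prec (T e) (T t)) + t (succ (T e) (T z)) + t (prec (T z) (T e))
  - e (prec (T z) (T t)).

Lemma Nov_defect (u v th : dual A) :
  th (circ succ prec (T u) (T v))
  - th (T (negrep (dualrep (Lodot succ prec)) (T u) v + dualrep (Rmul prec) (T v) u))
  = ybe_form th u v.
Proof.
rewrite [th (T _)]Ts_skew add_lfunE opp_lfunE.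
rewrite (dualrepE odot_bil) (dualrepE (bilinear_opT prec_bil)).
rewrite /ybe_form /odot /circ !linearD /=; ring.
Qed.

Let Lstar_bil : bilinear_op (Lstar succ prec) :=
  bilinear_opD circ_bil (bilinear_opT circ_bil).
Let Rodot_bil : bilinear_op (Rodot succ prec) :=
  bilinear_opD (bilinear_opT succ_bil) prec_bil.

Lemma succ_defect (u v th : dual A) :
  th (succ (T u) (T v))
  - th (T (negrep (dualrep (Lstar succ prec)) (T u) v
           + negrep (dualrep (Rmul succ)) (T v) u))
  = ybe_form v u th + ybe_form v th u.
Proof.
rewrite [th (T _)]Ts_skew add_lfunE !opp_lfunE.
rewrite (dualrepE Lstar_bil) (dualrepE (bilinear_opT succ_bil)).
rewrite /ybe_form /Lstar /Lmul /Rmul !linearD /=; ring.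
Qed.

Lemma prec_defect (u v th : dual A) :
  th (prec (T u) (T v))
  - th (T (dualrep (Rodot succ prec) (T u) v
           + dualrep (Rmul (circ succ prec)) (T v) u))
  = ybe_form th u v - (ybe_form v u th + ybe_form v th u).
Proof.
rewrite [th (T _)]Ts_skew add_lfunE.
rewrite (dualrepE Rodot_bil) (dualrepE (bilinear_opT circ_bil)).
rewrite /ybe_form /Rodot /Lmul /Rmul /circ !linearD /=; ring.
Qed.

Lemma APN_YBE_sumE (z e t : dual A) :
  \sum_(i < m) \sum_(j < m)
     (z (circ succ prec (a i) (a j)) * e (b i) * t (b j)
    + z (a j) * e (a i) * t (odot succ prec (b i) (b j))
    + z (a i) * e (prec (b i) (a j)) * t (b j))
  = ybe_form z e t.
Proof.
have pair_sum mu : bilinear_op mu -> forall (th : dual A) (c d : 'I_m -> K) x y,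
    th (mu (\sum_(i < m) c i *: x i) (\sum_(j < m) d j *: y j))
    = \sum_(i < m) \sum_(j < m) c i * d j * th (mu (x i) (y j)).
  move=> mu_bil th c d x y; rewrite bilinear_op_sum // linear_sum.
  by apply: eq_bigr => i _; rewrite linear_sum; apply: eq_bigr => j _; rewrite linearZ.
have -> : ybe_form z e t = z (circ succ prec (T e) (T t))
    + t (odot succ prec (T e) (T z)) - e (prec (T z) (T t)).
  by rewrite [t (odot _ _ _ _)]linearD addrA.
(* Where the sum evaluates e or t at the b_i, skew-symmetry gives T e or T t. *)
rewrite [T t]Ts_skew_sum {1}[T e]Ts_skew_sum /Ts.
rewrite (pair_sum _ circ_bil) (pair_sum _ odot_bil) (pair_sum _ prec_bil).
rewrite -sumrN -!big_split; apply: eq_bigr => i _.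
by rewrite -sumrN -!big_split; apply: eq_bigr => j _ /=; ring.
Qed.

Lemma APN_YBE_ybe_form :
  APN_YBE succ prec a b <-> forall z e t, ybe_form z e t = 0.
Proof.
split=> ybe z e t; first by rewrite -APN_YBE_sumE; apply: ybe.
by rewrite APN_YBE_sumE ybe.
Qed.

Lemma O_operator_Nov_ybe_form :
  O_operator_Nov (circ succ prec)
    (negrep (dualrep (Lodot succ prec))) (dualrep (Rmul prec)) T
  <-> forall z e t, ybe_form z e t = 0.
Proof.
split=> [[_ O_T] z e t | ybe0]; first by rewrite -Nov_defect O_T subrr.
split=> [|u v]; first exact: Ts_linear.
by apply: eq_dual => th; apply: subr0_eq; rewrite Nov_defect.
Qed.

Lemma O_operator_APN_ybe_form :
  O_operator_APN succ prec
    (negrep (dualrep (Lstar succ prec))) (negrep (dualrep (Rmul succ)))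
    (dualrep (Rodot succ prec)) (dualrep (Rmul (circ succ prec))) T
  <-> forall z e t, ybe_form z e t = 0.
Proof.
split=> [[_ [O_succ O_prec]] z e t | ybe0].
  move: (prec_defect e t z); rewrite -succ_defect O_succ O_prec !subrr subr0.
  by move/esym.
split; first exact: Ts_linear.
split=> u v; apply: eq_dual => th; apply: subr0_eq.
  by rewrite succ_defect !ybe0 addr0.
by rewrite prec_defect !ybe0 addr0 subr0.
Qed.

End YangBaxter.
End SkewTensor.
End Dual.

Theorem mainTheorem7 (K : fieldType) (A : vectType K)
    (succ prec : A -> A -> A) (m : nat) (a b : 'I_m -> A) :
  anti_pre_Novikov succ prec ->
  skew_symmetric a b ->
  (APN_YBE succ prec a b <->
     O_operator_Nov (circ succ prec)
       (negrep (dualrep (Lodot succ prec))) (dualrep (Rmul prec)) (Ts a b)) /\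
  (O_operator_Nov (circ succ prec)
       (negrep (dualrep (Lodot succ prec))) (dualrep (Rmul prec)) (Ts a b) <->
   O_operator_APN succ prec
       (negrep (dualrep (Lstar succ prec))) (negrep (dualrep (Rmul succ)))
       (dualrep (Rodot succ prec)) (dualrep (Rmul (circ succ prec))) (Ts a b)).
Proof.
move=> [succ_bil [prec_bil _]] skew_ab.
have Nov_iff := O_operator_Nov_ybe_form skew_ab succ_bil prec_bil.
split.
  exact: iff_trans (APN_YBE_ybe_form skew_ab succ_bil prec_bil) (iff_sym Nov_iff).
exact: iff_trans Nov_iff (iff_sym (O_operator_APN_ybe_form skew_ab succ_bil prec_bil)).
Qed.
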